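(* $N^1(BA_2^+)=\Omega(n)$.
   Context: $BA_2^+$ is the syntactic ordered monoid of the language $(ab)^*\subseteq\{a,b\}^*$. Syntactic ordered monoid: for $L\subseteq\Sigma^*$ write $x\preceq_L y$ if for all $u,v\in\Sigma^*$, $uyv\in L\Rightarrow uxv\in L$, and $x\equiv_L y$ if both $x\preceq_L y$ and $y\preceq_L x$; the syntactic monoid is $\Sigma^*/\equiv_L$ ordered by $[x]\le_L[y]$ iff $x\preceq_L y$. Non-deterministic communication complexity: for $f:X\times Y\to\{0,1\}$, $N^1(f)$ is the minimum cost of a non-deterministic protocol for $f$; equivalently, up to an additive constant 2, $N^1(f)=\log_2 C^1(f)$, where $C^1(f)$ is the minimum number of rectangles $S\times T$ on which $f\equiv1$ whose union is $f^{-1}(1)$. An order ideal of an ordered monoid $M$ is a subset $I$ with $y\in I, x\le y\Rightarrow x\in I$. For an order ideal $I$, $N^1(M,I)(n)$ is $N^1$ of the function where Alice receives $m_1,m_3,\dots,m_{2n-1}\in M$, Bob receives $m_2,\dots,m_{2n}\in M$, with value $1$ iff $m_1\cdots m_{2n}\in I$; $N^1(M)(n)=\max_I N^1(M,I)(n)$. Asymptotics are as $n\to\infty$. *)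

From mathcomp Require Import all_boot.
Set Implicit Arguments. Unset Strict Implicit. Unset Printing Implicit Defensive.

Inductive letter := La | Lb.
Definition word := seq letter.

Definition inL (w : word) : Prop := exists k, w = flatten (nseq k [:: La; Lb]).

Definition synle (x y : word) : Prop :=
  forall u v : word, inL (u ++ y ++ v) -> inL (u ++ x ++ v).

Definition order_ideal (M : finType) (le : rel M) (I : {set M}) : Prop :=
  forall x y, y \in I -> le x y -> x \in I.

(** Product m_1 m_2 ... m_{2n}, Alice holding x_i = m_{2i-1}, Bob y_i = m_{2i}. *)
Definition interleave_prod (M : finType) (mul : M -> M -> M) (one : M) (n : nat)
    (x y : {ffun 'I_n -> M}) : M :=
  foldr mul one (flatten [seq [:: x i; y i] | i <- enum 'I_n]).

Definition commfun (M : finType) (mul : M -> M -> M) (one : M) (I : {set M}) (n : nat)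
    (x y : {ffun 'I_n -> M}) : bool :=
  interleave_prod mul one x y \in I.

Definition is_1cover (A B : finType) (f : A -> B -> bool) (rs : seq ({set A} * {set B})) : Prop :=
  (forall r, r \in rs -> forall x y, x \in r.1 -> y \in r.2 -> f x y) /\
  (forall x y, f x y -> exists2 r, r \in rs & (x \in r.1) && (y \in r.2)).

From mathcomp Require Import all_boot.

(* The sets S of positions form a fooling set of size 2^n for the principal
   ideal below the class of (ab)^n: Alice plays a at positions in S and the
   empty word elsewhere, Bob plays b at positions in S and ab elsewhere.  Along
   the diagonal the product is (ab)^n, while for S <> T some position i lies in
   exactly one of them and one of the two crossed products contains the factor
   a.ab, so it is not below (ab)^n: by the syntactic order it would otherwise
   lie in (ab)^*. *)

Section FoolingSet.

Context {A B T : finType} {f : A -> B -> bool} {x : T -> A} {y : T -> B}.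
Hypothesis f_diag : forall s, f (x s) (y s).
Hypothesis f_cross : forall s t, f (x s) (y t) -> f (x t) (y s) -> s = t.

Lemma fooling_set_card_le rs : is_1cover f rs -> #|T| <= size rs.
Proof.
move=> [rect cover].
pose inr s (r : {set A} * {set B}) := (x s \in r.1) && (y s \in r.2).
have has_inr s : has (inr s) rs.
  by have [r r_rs r_s] := cover _ _ (f_diag s); apply/hasP; exists r.
pose g s := find (inr s) rs.
have g_inj : injective g.
  move=> s t gst; pose r := nth (set0, set0) rs (g s).
  have r_rs : r \in rs by rewrite mem_nth // -has_find.
  have /andP[xs ys] : inr s r by apply: nth_find.
  have /andP[xt yt] : inr t r by rewrite /r gst; apply: nth_find.
  exact: f_cross (rect r r_rs _ _ xs yt) (rect r r_rs _ _ xt ys).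
rewrite cardE -(size_map g) -(size_iota 0 (size rs)).
apply: uniq_leq_size; first by rewrite map_inj_uniq ?enum_uniq.
by move=> _ /mapP[s _ ->]; rewrite mem_iota add0n /g -has_find has_inr.
Qed.

End FoolingSet.

Lemma ab_pow_no_aa k u v : flatten (nseq k [:: La; Lb]) <> u ++ La :: La :: v.
Proof.
elim: k u => [|k IH] [|c [|d u]] //=.
by case=> _ _; apply: IH.
Qed.

Lemma notinL_aa u v : ~ inL (u ++ La :: La :: v).
Proof. by case=> k /esym; apply: ab_pow_no_aa. Qed.

Lemma synle_trans x y z : synle x y -> synle y z -> synle x z.
Proof. by move=> xy yz u v /yz /xy. Qed.

Lemma synle_inL x y : synle x y -> inL y -> inL x.
Proof. by move=> xy; rewrite -[y]cats0 -[x]cats0; apply: (xy [::]). Qed.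

Lemma flatten_ab_pow (I : Type) (s : seq I) :
  flatten [seq [:: La; Lb] | _ <- s] = flatten (nseq (size s) [:: La; Lb]).
Proof. by elim: s => //= _ s ->. Qed.

Section FoolingWords.

Context {n : nat}.
Implicit Types S T : {set 'I_n}.

Definition fool_x S (i : 'I_n) : word := if i \in S then [:: La] else [::].
Definition fool_y S (i : 'I_n) : word := if i \in S then [:: Lb] else [:: La; Lb].

Definition fool_word S T : word := flatten [seq fool_x S i ++ fool_y T i | i <- enum 'I_n].

Lemma fool_word_diag S : fool_word S S = flatten (nseq n [:: La; Lb]).
Proof.
rewrite -[in RHS](size_enum_ord n) -flatten_ab_pow /fool_word.
by congr flatten; apply: eq_map => i; rewrite /fool_x /fool_y; case: (i \in S).
Qed.

Lemma fool_word_notinL {S T i} : i \in S -> i \notin T -> ~ inL (fool_word S T).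
Proof.
move=> iS iT; rewrite /fool_word; have : i \in enum 'I_n by rewrite mem_enum.
case/splitPr => s1 s2; rewrite map_cat flatten_cat /= /fool_x /fool_y.
by rewrite iS (negPf iT) /=; apply: notinL_aa.
Qed.

Lemma fool_word_inj {S T} : inL (fool_word S T) -> inL (fool_word T S) -> S = T.
Proof.
move=> ST TS; apply/setP => i; case iS: (i \in S); case iT: (i \in T) => //.
- by case: (fool_word_notinL iS (negbT iT) ST).
- by case: (fool_word_notinL iT (negbT iS) TS).
Qed.

End FoolingWords.

Section SyntacticMonoid.

Context {M : finType} {mul : M -> M -> M} {one : M} {le : rel M} {phi : word -> M}.
Hypothesis phi_surj : forall m : M, exists w, phi w = m.
Hypothesis phi_mul : forall u v, phi (u ++ v) = mul (phi u) (phi v).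
Hypothesis phi_one : phi [::] = one.
Hypothesis le_synle : forall x y, le (phi x) (phi y) <-> synle x y.

Lemma le_syn_trans : transitive le.
Proof.
move=> q p r; have [x <-] := phi_surj p; have [y <-] := phi_surj q.
have [z <-] := phi_surj r.
by move=> /le_synle xy /le_synle yz; apply/le_synle; apply: synle_trans xy yz.
Qed.

Lemma order_ideal_principal m : order_ideal le [set p | le p m].
Proof. by move=> p q; rewrite !inE => qm pq; apply: le_syn_trans qm. Qed.

Lemma foldr_mul_phi (I : Type) (s : seq I) (u v : I -> word) :
  foldr mul one (flatten [seq [:: phi (u i); phi (v i)] | i <- s])
  = phi (flatten [seq u i ++ v i | i <- s]).
Proof. by elim: s => [|i s IH] /=; rewrite ?phi_one // IH -!phi_mul catA. Qed.

Lemma interleave_prod_phi n (u v : 'I_n -> word) :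
  interleave_prod mul one [ffun i => phi (u i)] [ffun i => phi (v i)]
  = phi (flatten [seq u i ++ v i | i <- enum 'I_n]).
Proof.
rewrite /interleave_prod -foldr_mul_phi.
by congr (foldr _ _ (flatten _)); apply: eq_map => i; rewrite !ffunE.
Qed.

End SyntacticMonoid.

Theorem mainTheorem10
  (M : finType) (mul : M -> M -> M) (one : M) (le : rel M) (phi : word -> M)
  (Hsurj : forall m : M, exists w, phi w = m)
  (Hmul : forall u v, phi (u ++ v) = mul (phi u) (phi v))
  (Hone : phi [::] = one)
  (Hanti : forall p q, le p q -> le q p -> p = q)
  (Hle : forall x y, le (phi x) (phi y) <-> synle x y) :
  exists K N0 : nat, 0 < K /\
    forall n : nat, N0 <= n ->
      exists I : {set M}, order_ideal le I /\
        forall rs, is_1cover (commfun mul one I (n:=n)) rs -> 2 ^ n <= (size rs) ^ K.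
Proof.
exists 1, 0; split => // n _.
pose w0 := flatten (nseq n [:: La; Lb]).
pose I := [set m | le m (phi w0)].
exists I; split; first exact: (order_ideal_principal Hsurj Hle (phi w0)).
pose xS (S : {set 'I_n}) := [ffun i => phi (fool_x S i)].
pose yS (S : {set 'I_n}) := [ffun i => phi (fool_y S i)].
have commfun_fool S T : commfun mul one I (xS S) (yS T) <-> synle (fool_word S T) w0.
  by rewrite /commfun (interleave_prod_phi Hmul Hone) inE; apply: Hle.
have w0L : inL w0 by exists n.
have fool_diag S : commfun mul one I (xS S) (yS S).
  by apply/commfun_fool; rewrite fool_word_diag => u v.
have fool_cross S T : commfun mul one I (xS S) (yS T) ->
    commfun mul one I (xS T) (yS S) -> S = T.
  move=> /commfun_fool/synle_inL/(_ w0L) ST.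
  by move=> /commfun_fool/synle_inL/(_ w0L) /(fool_word_inj ST).
move=> rs /(fooling_set_card_le fool_diag fool_cross).
by rewrite expn1 -cardsT -powersetT card_powerset cardsT card_ord.
Qed.
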